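(* Let $(x_n)$ be a nonincreasing sequence of positive reals that is interval-filling and whose cardinal function $f$ satisfies $\mathrm{rng}(f)=\{1,m\}$ for some integer $m\ge3$. Then $x_k\le\frac12 r_k$ for all $k\in\mathbb{N}$.
   Context: For a summable sequence $\mathbf{x}=(x_n)$ of positive reals, $\mathcal{A}(\mathbf{x})=\{\sum_{n\in A}x_n: A\subseteq\mathbb{N}\}$ is its achievement set and its cardinal function $f$ assigns to $x\in\mathcal{A}(\mathbf{x})$ the cardinality (a positive integer, $\omega$, or $\mathfrak{c}$) of $\{(\varepsilon_n)\in\{0,1\}^{\mathbb{N}}:\sum\varepsilon_nx_n=x\}$. The sequence is interval-filling if $\mathcal{A}(\mathbf{x})$ is an interval. The tail sums are $r_n=\sum_{k=n+1}^\infty x_k$. *)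

From Stdlib Require Import Reals List.
From Coquelicot Require Import Coquelicot.
Open Scope R_scope.

Definition subseq_term (x : nat -> R) (e : nat -> bool) (n : nat) : R :=
  if e n then x n else 0.

Definition reps (x : nat -> R) (s : R) : (nat -> bool) -> Prop :=
  fun e => is_series (subseq_term x e) s.

Definition achievement (x : nat -> R) (s : R) : Prop :=
  exists e : nat -> bool, reps x s e.

Definition has_card {T : Type} (S : T -> Prop) (n : nat) : Prop :=
  exists l : list T, NoDup l /\ length l = n /\ (forall t, S t <-> In t l).

Definition interval_filling (x : nat -> R) : Prop :=
  forall a b c, achievement x a -> achievement x b -> a <= c <= b ->
    achievement x c.

(* rng(f) = {1, m}, with f the cardinal function *)
Definition card_fun_range_1_m (x : nat -> R) (m : nat) : Prop :=
  (forall s, achievement x s -> has_card (reps x s) 1 \/ has_card (reps x s) m) /\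
  (exists s, achievement x s /\ has_card (reps x s) 1) /\
  (exists s, achievement x s /\ has_card (reps x s) m).

Definition tailsum (x : nat -> R) (n : nat) : R :=
  Series (fun j => x (n + 1 + j)%nat).

From Stdlib Require Import Reals List Lra Lia FunctionalExtensionality.
From Coquelicot Require Import Coquelicot.
Open Scope R_scope.

(* Suppose x_k > r_k / 2 and write a = x_k, r = r_k.  A sum below a cannot use x_0, ..., x_k,
   so interval-filling gives [0, a] in A(x) and a <= r.  Let the copies be the j <= k with
   x_j = a.  The representations of a are the singletons of the copies and the tail
   complements (indices > k) of the representations of r - a; since f only takes the values
   1 and m, this forces r - a to have a unique representation and m = #copies + 1.
   A term x_j (j <= k) in (a, r] would then have m + 1 representations.  Otherwise pick u
   just above r and below every x_j > r with j <= k: each representation of u is a copy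
   added to a representation of u - a, so u has either #copies = m - 1 or at least m + 1
   representations, both impossible when m >= 3. *)

Lemma is_series_0 : is_series (fun _ : nat => 0) 0.
Proof.
  apply filterlim_ext with (fun _ => 0).
  - intros n. rewrite sum_n_const. simpl. ring.
  - apply filterlim_const.
Qed.

Lemma is_series_delta (j : nat) (c : R) :
  is_series (fun n => if Nat.eqb n j then c else 0) c.
Proof.
  induction j as [|j IH]; apply is_series_decr_1; simpl.
  - match goal with |- is_series _ ?l => replace l with 0 by (change (0 = c + - c); ring) end.
    exact is_series_0.
  - match goal with |- is_series _ ?l => replace l with c by (change (c = c + - 0); ring) end.
    exact IH.
Qed.

Lemma is_series_le (a b : nat -> R) (la lb : R) :
  (forall n, 0 <= a n <= b n) -> is_series a la -> is_series b lb -> la <= lb.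
Proof.
  intros Hab Ha Hb.
  rewrite <- (is_series_unique _ _ Ha), <- (is_series_unique _ _ Hb).
  apply Series_le; [exact Hab | exists lb; exact Hb].
Qed.

Lemma nonincreasing_le (x : nat -> R) :
  (forall n, x (S n) <= x n) -> forall i j, (i <= j)%nat -> x j <= x i.
Proof.
  intros xdec i j Hij. induction Hij as [|j _ IH]; [lra|]. specialize (xdec j). lra.
Qed.

Lemma exists_gap_above (f : nat -> R) (n : nat) (r b : R) :
  r < b -> exists u, r < u < b /\ forall j, (j < n)%nat -> r < f j -> u < f j.
Proof.
  intros Hrb. induction n as [|n [u [Hu Hf]]].
  - exists ((r + b) / 2). split; [lra | intros j Hj; lia].
  - destruct (Rlt_or_le r (f n)) as [Hn|Hn].
    + exists ((r + Rmin u (f n)) / 2).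
      pose proof (Rmin_l u (f n)). pose proof (Rmin_r u (f n)).
      assert (r < Rmin u (f n)) by (apply Rmin_glb_lt; lra).
      split; [lra|]. intros j Hj Hfj.
      destruct (Nat.eq_dec j n) as [->|Hjn]; [lra|].
      specialize (Hf j ltac:(lia) Hfj). lra.
    + exists u. split; [exact Hu|]. intros j Hj Hfj.
      destruct (Nat.eq_dec j n) as [->|Hjn]; [lra|]. apply Hf; [lia|exact Hfj].
Qed.

Definition add_index (j : nat) (e : nat -> bool) : nat -> bool :=
  fun i => orb (Nat.eqb i j) (e i).

Definition remove_index (j : nat) (e : nat -> bool) : nat -> bool :=
  fun i => andb (negb (Nat.eqb i j)) (e i).

Definition avoids (k : nat) (e : nat -> bool) : Prop :=
  forall i, (i <= k)%nat -> e i = false.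

Definition tail_compl (k : nat) (e : nat -> bool) : nat -> bool :=
  fun i => andb (Nat.ltb k i) (negb (e i)).

Lemma add_remove_index j e : e j = true -> add_index j (remove_index j e) = e.
Proof.
  intros Hj. apply functional_extensionality. intros i. unfold add_index, remove_index.
  destruct (Nat.eqb_spec i j); [subst i; now rewrite Hj | reflexivity].
Qed.

Lemma add_index_inj j e1 e2 :
  e1 j = false -> e2 j = false -> add_index j e1 = add_index j e2 -> e1 = e2.
Proof.
  intros H1 H2 E. apply functional_extensionality. intros i.
  assert (Ei : add_index j e1 i = add_index j e2 i) by now rewrite E.
  unfold add_index in Ei. destruct (Nat.eqb_spec i j); [subst i; congruence | exact Ei].
Qed.

Lemma add_index_neq j1 j2 e1 e2 :
  e2 j1 = false -> j1 <> j2 -> add_index j1 e1 <> add_index j2 e2.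
Proof.
  intros H Hj E. assert (Ej : add_index j1 e1 j1 = add_index j2 e2 j1) by now rewrite E.
  unfold add_index in Ej. rewrite Nat.eqb_refl, H in Ej.
  destruct (Nat.eqb_spec j1 j2); [contradiction | discriminate].
Qed.

Lemma avoids_tail_compl k e : avoids k (tail_compl k e).
Proof. intros i Hi. unfold tail_compl. destruct (Nat.ltb_spec k i); [lia | reflexivity]. Qed.

Lemma tail_compl_involutive k e : avoids k e -> tail_compl k (tail_compl k e) = e.
Proof.
  intros He. apply functional_extensionality. intros i. unfold tail_compl.
  destruct (Nat.ltb_spec k i); simpl.
  - now destruct (e i).
  - symmetry. apply He. lia.
Qed.

Lemma tail_compl_neq_add_index k j e e' : (j <= k)%nat -> tail_compl k e <> add_index j e'.
Proof.
  intros Hj E. assert (Ej : tail_compl k e j = add_index j e' j) by now rewrite E.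
  rewrite avoids_tail_compl in Ej by exact Hj. unfold add_index in Ej.
  rewrite Nat.eqb_refl in Ej. discriminate.
Qed.

Lemma avoids_or_used k e : avoids k e \/ exists j, (j <= k)%nat /\ e j = true.
Proof.
  destruct (existsb e (seq 0 (S k))) eqn:E.
  - right. apply existsb_exists in E as [j [Hj Hej]]. apply in_seq in Hj.
    exists j. split; [lia | exact Hej].
  - left. intros i Hi. destruct (e i) eqn:Ei; [|reflexivity].
    assert (existsb e (seq 0 (S k)) = true)
      by (apply existsb_exists; exists i; split; [apply in_seq; lia | exact Ei]).
    congruence.
Qed.

Lemma reps_empty (x : nat -> R) : reps x 0 (fun _ => false).
Proof. exact is_series_0. Qed.

Lemma reps_sum_eq (x : nat -> R) s s' e : s = s' -> reps x s e -> reps x s' e.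
Proof. now intros <-. Qed.

Lemma reps_add_index (x : nat -> R) j e s :
  e j = false -> reps x s e -> reps x (s + x j) (add_index j e).
Proof.
  intros Hj He. unfold reps in *.
  apply is_series_ext with (fun n => subseq_term x e n + (if Nat.eqb n j then x j else 0)).
  - intros n. unfold subseq_term, add_index.
    destruct (Nat.eqb_spec n j); [subst n; rewrite Hj; simpl; ring | simpl; ring].
  - exact (is_series_plus _ _ _ _ He (is_series_delta j (x j))).
Qed.

Lemma reps_remove_index (x : nat -> R) j e s :
  e j = true -> reps x s e -> reps x (s - x j) (remove_index j e).
Proof.
  intros Hj He. unfold reps in *.
  apply is_series_ext with (fun n => subseq_term x e n - (if Nat.eqb n j then x j else 0)).
  - intros n. unfold subseq_term, remove_index.
    destruct (Nat.eqb_spec n j); [subst n; rewrite Hj; simpl; ring | simpl; ring].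
  - exact (is_series_minus _ _ _ _ He (is_series_delta j (x j))).
Qed.

Lemma reps_tailsum (x : nat -> R) k : ex_series x -> reps x (tailsum x k) (fun i => Nat.ltb k i).
Proof.
  intros xser. unfold reps. apply (is_series_decr_n _ (S k)); [lia|]. simpl pred.
  rewrite (sum_n_ext_loc _ (fun _ => 0))
    by (intros n Hn; unfold subseq_term; destruct (Nat.ltb_spec k n); [lia | reflexivity]).
  match goal with |- is_series _ ?l =>
    replace l with (tailsum x k) by (change (tailsum x k = tailsum x k + - sum_n (fun _ => 0) k);
                                     rewrite sum_n_const; ring) end.
  apply is_series_ext with (fun j => x (k + 1 + j)%nat).
  - intros n. unfold subseq_term. destruct (Nat.ltb_spec k (S k + n)); [f_equal; lia | lia].
  - apply Series_correct, (ex_series_incr_n x (k + 1)), xser.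
Qed.

Section Representations.

Variable x : nat -> R.
Hypothesis xpos : forall n, 0 < x n.

Lemma reps_le e1 e2 s1 s2 :
  (forall n, e1 n = true -> e2 n = true) -> reps x s1 e1 -> reps x s2 e2 -> s1 <= s2.
Proof.
  intros Hsub. apply is_series_le. intros n. unfold subseq_term.
  specialize (xpos n). specialize (Hsub n).
  destruct (e1 n), (e2 n); [lra | discriminate (Hsub eq_refl) | lra | lra].
Qed.

Lemma reps_nonneg e s : reps x s e -> 0 <= s.
Proof. apply reps_le with (fun _ => false); [discriminate | apply reps_empty]. Qed.

Lemma reps_term_le e s j : e j = true -> reps x s e -> x j <= s.
Proof.
  intros Hj He. pose proof (reps_nonneg _ _ (reps_remove_index x j e s Hj He)). lra.
Qed.

Lemma reps_zero_inv e : reps x 0 e -> e = fun _ => false.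
Proof.
  intros He. apply functional_extensionality. intros i.
  destruct (e i) eqn:Ei; [|reflexivity].
  pose proof (reps_term_le e 0 i Ei He). specialize (xpos i). lra.
Qed.

Lemma reps_eq_add_index s j e e0 :
  e j = true -> reps x s e -> (forall e', reps x (s - x j) e' -> e' = e0) ->
  e = add_index j e0.
Proof.
  intros Hj He Huniq. rewrite <- (Huniq _ (reps_remove_index x j e s Hj He)).
  symmetry. exact (add_remove_index j e Hj).
Qed.

Hypothesis xser : ex_series x.

Lemma reps_le_tailsum k e s : avoids k e -> reps x s e -> s <= tailsum x k.
Proof.
  intros Hk He.
  apply (reps_le e (fun i => Nat.ltb k i) s); [|exact He | exact (reps_tailsum x k xser)].
  intros n Hn. destruct (Nat.ltb_spec k n); [reflexivity|]. rewrite Hk in Hn by lia. discriminate.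
Qed.

Lemma reps_tail_compl k e s :
  avoids k e -> reps x s e -> reps x (tailsum x k - s) (tail_compl k e).
Proof.
  intros Hk He. unfold reps.
  apply is_series_ext
    with (fun n => subseq_term x (fun i => Nat.ltb k i) n - subseq_term x e n).
  - intros n. unfold subseq_term, tail_compl. destruct (Nat.ltb_spec k n).
    + destruct (e n); simpl; ring.
    + rewrite Hk by lia. simpl. ring.
  - exact (is_series_minus _ _ _ _ (reps_tailsum x k xser) He).
Qed.

End Representations.

Lemma has_card_length_le {T : Type} (S : T -> Prop) n l :
  has_card S n -> NoDup l -> (forall t, In t l -> S t) -> (length l <= n)%nat.
Proof.
  intros [L [_ [<- HL]]] Hl Hin. apply NoDup_incl_length; [exact Hl|].
  intros t Ht. apply HL, Hin, Ht.
Qed.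

Lemma has_card_le_length {T : Type} (S : T -> Prop) n l :
  has_card S n -> (forall t, S t -> In t l) -> (n <= length l)%nat.
Proof.
  intros [L [HL [<- HSL]]] Hin. apply NoDup_incl_length; [exact HL|].
  intros t Ht. apply Hin, HSL, Ht.
Qed.

Lemma has_card_1_eq {T : Type} (S : T -> Prop) a b : has_card S 1 -> S a -> S b -> a = b.
Proof.
  intros [[|c [|d L]] [_ [Hlen HL]]] Ha Hb; try discriminate Hlen.
  apply HL in Ha as [<- | []]. apply HL in Hb as [<- | []]. reflexivity.
Qed.

Section CardinalRange.

Variables (x : nat -> R) (m : nat).
Hypothesis m_pos : (1 <= m)%nat.
Hypothesis card_range :
  forall s, achievement x s -> has_card (reps x s) 1 \/ has_card (reps x s) m.

Lemma reps_length_le s l :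
  NoDup l -> (forall e, In e l -> reps x s e) -> (length l <= m)%nat.
Proof.
  intros Hl Hin. destruct l as [|e l']; [simpl; lia|].
  assert (Hs : achievement x s) by (exists e; apply Hin; left; reflexivity).
  destruct (card_range s Hs) as [H|H]; apply (has_card_length_le _ _ _ H) in Hl; auto; lia.
Qed.

Lemma has_card_m_of_neq s e1 e2 :
  reps x s e1 -> reps x s e2 -> e1 <> e2 -> has_card (reps x s) m.
Proof.
  intros H1 H2 Hneq. destruct (card_range s (ex_intro _ e1 H1)) as [H|H]; [|exact H].
  exfalso. exact (Hneq (has_card_1_eq _ _ _ H H1 H2)).
Qed.

End CardinalRange.

Section LargeTerm.

Variables (x : nat -> R) (m k : nat).
Hypothesis xpos : forall n, 0 < x n.
Hypothesis xdec : forall n, x (S n) <= x n.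
Hypothesis xser : ex_series x.
Hypothesis xfill : interval_filling x.
Hypothesis m_ge3 : (3 <= m)%nat.
Hypothesis card_range :
  forall s, achievement x s -> has_card (reps x s) 1 \/ has_card (reps x s) m.
Hypothesis tailsum_lt : tailsum x k < 2 * x k.

Lemma achievement_le_xk s : 0 <= s <= x k -> achievement x s.
Proof.
  intros Hs. apply (xfill 0 (x k) s); [| |exact Hs].
  - exists (fun _ => false). apply reps_empty.
  - exists (add_index k (fun _ => false)).
    apply (reps_sum_eq x (0 + x k)); [ring | apply reps_add_index, reps_empty; reflexivity].
Qed.

Lemma avoids_of_lt_xk s e : reps x s e -> s < x k -> avoids k e.
Proof.
  intros He Hs i Hi. destruct (e i) eqn:Ei; [|reflexivity].
  pose proof (reps_term_le x xpos e s i Ei He). pose proof (nonincreasing_le x xdec i k Hi). lra.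
Qed.

Lemma xk_le_tailsum : x k <= tailsum x k.
Proof.
  destruct (Rle_or_lt (x k) (tailsum x k)) as [H|H]; [exact H|].
  pose proof (reps_nonneg x xpos _ _ (reps_tailsum x k xser)).
  destruct (achievement_le_xk ((x k + tailsum x k) / 2)) as [e He]; [lra|].
  pose proof (reps_le_tailsum x xpos xser k e _ (avoids_of_lt_xk _ _ He ltac:(lra)) He). lra.
Qed.

Definition copies : list nat :=
  filter (fun j => if Req_EM_T (x j) (x k) then true else false) (seq 0 (S k)).

Lemma In_copies j : In j copies <-> (j <= k)%nat /\ x j = x k.
Proof.
  unfold copies. rewrite filter_In, in_seq.
  destruct (Req_EM_T (x j) (x k)); split; intros H; intuition (try lia; try discriminate).
Qed.

Lemma copies_le j : In j copies -> (j <= k)%nat.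
Proof. intros Hj. apply In_copies, Hj. Qed.

Lemma NoDup_copies : NoDup copies.
Proof. apply NoDup_filter, seq_NoDup. Qed.

Lemma In_copies_of_used s e j :
  reps x s e -> e j = true -> (j <= k)%nat ->
  (forall i, (i <= k)%nat -> x k < x i -> s < x i) -> In j copies.
Proof.
  intros He Hj Hjk Hgap. apply In_copies. split; [exact Hjk|].
  pose proof (reps_term_le x xpos e s j Hj He) as Hjs.
  destruct (Rle_lt_or_eq_dec _ _ (nonincreasing_le x xdec j k Hjk)) as [Hlt|Heq]; [|auto].
  specialize (Hgap j Hjk Hlt). lra.
Qed.

Lemma NoDup_map_add_index e : avoids k e -> NoDup (map (fun c => add_index c e) copies).
Proof.
  intros Hk. apply NoDup_map_NoDup_ForallPairs; [|exact NoDup_copies].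
  intros c1 c2 Hc1 _ E. destruct (Nat.eq_dec c1 c2) as [|Hc12]; [assumption|].
  exfalso. exact (add_index_neq c1 c2 e e (Hk c1 (copies_le c1 Hc1)) Hc12 E).
Qed.

Definition xk_reps (e0 : nat -> bool) : list (nat -> bool) :=
  tail_compl k e0 :: map (fun c => add_index c (fun _ => false)) copies.

Lemma length_xk_reps e0 : length (xk_reps e0) = S (length copies).
Proof. simpl. now rewrite length_map. Qed.

Lemma NoDup_xk_reps e0 : NoDup (xk_reps e0).
Proof.
  constructor; [|apply NoDup_map_add_index; now intros i _].
  intros Hin. apply in_map_iff in Hin as [c [Hc Hcop]].
  exact (tail_compl_neq_add_index k c e0 _ (copies_le c Hcop) (eq_sym Hc)).
Qed.

Lemma exists_reps_tailsum_minus_xk : exists e0, reps x (tailsum x k - x k) e0.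
Proof. apply achievement_le_xk. pose proof xk_le_tailsum. lra. Qed.

Lemma avoids_of_reps_tailsum_minus_xk e : reps x (tailsum x k - x k) e -> avoids k e.
Proof. intros He. apply (avoids_of_lt_xk _ _ He). lra. Qed.

Lemma xk_reps_sound e0 e :
  reps x (tailsum x k - x k) e0 -> In e (xk_reps e0) -> reps x (x k) e.
Proof.
  intros He0 [<- | Hin].
  - apply (reps_sum_eq x (tailsum x k - (tailsum x k - x k))); [ring|].
    exact (reps_tail_compl x xser k e0 _ (avoids_of_reps_tailsum_minus_xk e0 He0) He0).
  - apply in_map_iff in Hin as [c [<- Hc]]. apply In_copies in Hc as [_ Hc].
    apply (reps_sum_eq x (0 + x c)); [rewrite Hc; ring|].
    apply reps_add_index, reps_empty. reflexivity.
Qed.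

Lemma length_copies_lt : (length copies < m)%nat.
Proof.
  destruct exists_reps_tailsum_minus_xk as [e0 He0].
  enough (H : (length (xk_reps e0) <= m)%nat) by (rewrite length_xk_reps in H; lia).
  apply (reps_length_le x m ltac:(lia) card_range (x k) (xk_reps e0)).
  - apply NoDup_xk_reps.
  - intros e. apply xk_reps_sound, He0.
Qed.

Lemma has_card_reps_xk : has_card (reps x (x k)) m.
Proof.
  destruct exists_reps_tailsum_minus_xk as [e0 He0].
  apply (has_card_m_of_neq x m card_range _ (tail_compl k e0) (add_index k (fun _ => false))).
  - apply (xk_reps_sound e0); [exact He0 | left; reflexivity].
  - apply (xk_reps_sound e0); [exact He0|]. right.
    apply (in_map (fun c => add_index c (fun _ => false))), In_copies. split; [lia | reflexivity].
  - apply tail_compl_neq_add_index. lia.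
Qed.

Lemma reps_tailsum_minus_xk_unique e1 e2 :
  reps x (tailsum x k - x k) e1 -> reps x (tailsum x k - x k) e2 -> e1 = e2.
Proof.
  intros He1 He2. destruct (card_range _ (ex_intro _ e1 He1)) as [H|[L [HL [HlenL HinL]]]].
  { exact (has_card_1_eq _ _ _ H He1 He2). }
  exfalso.
  assert (HavL : forall e, In e L -> avoids k e)
    by (intros e He; apply avoids_of_reps_tailsum_minus_xk, HinL, He).
  assert (Hlen : (length (add_index k (fun _ => false) :: map (tail_compl k) L) <= m)%nat).
  { apply (reps_length_le x m ltac:(lia) card_range (x k)); [constructor|].
    - intros Hin. apply in_map_iff in Hin as [e [He _]].
      exact (tail_compl_neq_add_index k k e _ (le_n k) He).
    - apply NoDup_map_NoDup_ForallPairs; [|exact HL].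
      intros e e' He He' E.
      rewrite <- (tail_compl_involutive k e (HavL e He)), E.
      exact (tail_compl_involutive k e' (HavL e' He')).
    - intros e [<- | Hin].
      + apply (reps_sum_eq x (0 + x k)); [ring | apply reps_add_index, reps_empty; reflexivity].
      + apply in_map_iff in Hin as [e' [<- He']].
        apply (reps_sum_eq x (tailsum x k - (tailsum x k - x k))); [ring|].
        exact (reps_tail_compl x xser k e' _ (HavL e' He') (proj2 (HinL e') He')). }
  simpl in Hlen. rewrite length_map in Hlen. lia.
Qed.

Lemma xk_reps_complete e0 e :
  reps x (tailsum x k - x k) e0 -> reps x (x k) e -> In e (xk_reps e0).
Proof.
  intros He0 He. destruct (avoids_or_used k e) as [Hk | [j [Hjk Hj]]].
  - left. rewrite <- (tail_compl_involutive k e Hk). f_equal.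
    apply reps_tailsum_minus_xk_unique; [exact He0|].
    exact (reps_tail_compl x xser k e _ Hk He).
  - right. pose proof (In_copies_of_used _ _ _ He Hj Hjk (fun i _ H => H)) as Hcopy.
    replace e with (add_index j (fun _ => false)); [exact (in_map _ _ _ Hcopy)|].
    symmetry. apply (reps_eq_add_index x (x k) j e _ Hj He).
    intros e'. rewrite (proj2 (proj1 (In_copies j) Hcopy)), Rminus_diag.
    apply reps_zero_inv, xpos.
Qed.

Lemma length_copies : S (length copies) = m.
Proof.
  destruct exists_reps_tailsum_minus_xk as [e0 He0].
  pose proof (has_card_le_length _ _ (xk_reps e0) has_card_reps_xk
                (fun e => xk_reps_complete e0 e He0)) as H.
  rewrite length_xk_reps in H. pose proof length_copies_lt. lia.
Qed.

Lemma tailsum_lt_of_gt_xk j : (j <= k)%nat -> x k < x j -> tailsum x k < x j.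
Proof.
  intros Hjk Hj. destruct (Rlt_or_le (tailsum x k) (x j)) as [H|Hle]; [exact H|].
  exfalso. pose proof xk_le_tailsum.
  destruct (achievement_le_xk (x j - x k)) as [e1 He1]; [lra|].
  destruct (achievement_le_xk (tailsum x k - x j)) as [e2 He2]; [lra|].
  assert (Hk1 : avoids k e1) by (apply (avoids_of_lt_xk _ _ He1); lra).
  assert (Hk2 : avoids k e2) by (apply (avoids_of_lt_xk _ _ He2); lra).
  set (l := add_index j (fun _ => false) :: tail_compl k e2
              :: map (fun c => add_index c e1) copies).
  assert (Hlen : (length l <= m)%nat).
  { apply (reps_length_le x m ltac:(lia) card_range (x j)).
    - constructor; [intros [Hin | Hin] | constructor].
      + exact (tail_compl_neq_add_index k j e2 _ Hjk Hin).
      + apply in_map_iff in Hin as [c [Hc Hcop]]. apply In_copies in Hcop as [Hck Hxc].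
        apply (add_index_neq c j e1 (fun _ => false)); [reflexivity | | exact Hc].
        intros ->. lra.
      + intros Hin. apply in_map_iff in Hin as [c [Hc Hcop]].
        exact (tail_compl_neq_add_index k c e2 _ (copies_le c Hcop) (eq_sym Hc)).
      + apply NoDup_map_add_index, Hk1.
    - intros e [<- | [<- | Hin]].
      + apply (reps_sum_eq x (0 + x j)); [ring | apply reps_add_index, reps_empty; reflexivity].
      + apply (reps_sum_eq x (tailsum x k - (tailsum x k - x j))); [ring|].
        exact (reps_tail_compl x xser k e2 _ Hk2 He2).
      + apply in_map_iff in Hin as [c [<- Hcop]]. apply In_copies in Hcop as [Hck Hxc].
        apply (reps_sum_eq x (x j - x k + x c)); [rewrite Hxc; ring|].
        apply reps_add_index; [exact (Hk1 c Hck) | exact He1]. }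
  unfold l in Hlen. simpl in Hlen. rewrite length_map in Hlen. pose proof length_copies. lia.
Qed.

Lemma exists_two_copies : exists c1 c2, In c1 copies /\ In c2 copies /\ c1 <> c2.
Proof.
  pose proof length_copies as Hlen. pose proof NoDup_copies as Hnd.
  destruct copies as [|c1 [|c2 rest]]; simpl in Hlen; try lia.
  exists c1, c2. apply NoDup_cons_iff in Hnd as [Hc1 _].
  split; [now left | split; [right; now left|]]. intros <-. apply Hc1. now left.
Qed.

Section Gap.

Variable u : R.
Hypothesis tailsum_lt_u : tailsum x k < u.
Hypothesis u_lt : u < 2 * x k.
Hypothesis u_lt_terms : forall j, (j <= k)%nat -> tailsum x k < x j -> u < x j.

Lemma avoids_of_reps_u_minus_xk e : reps x (u - x k) e -> avoids k e.
Proof. intros He. apply (avoids_of_lt_xk _ _ He). lra. Qed.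

Lemma reps_u_add_copy c e : In c copies -> reps x (u - x k) e -> reps x u (add_index c e).
Proof.
  intros Hc He. apply In_copies in Hc as [Hck Hxc].
  apply (reps_sum_eq x (u - x k + x c)); [rewrite Hxc; ring|].
  apply reps_add_index; [exact (avoids_of_reps_u_minus_xk e He c Hck) | exact He].
Qed.

Lemma reps_u_minus_xk_unique_absurd e0 :
  reps x (u - x k) e0 -> has_card (reps x (u - x k)) 1 -> False.
Proof.
  intros He0 H1.
  assert (Hincl : forall e, reps x u e -> In e (map (fun c => add_index c e0) copies)).
  { intros e He. destruct (avoids_or_used k e) as [Hk | [j [Hjk Hj]]].
    - pose proof (reps_le_tailsum x xpos xser k e u Hk He). lra.
    - assert (Hcopy : In j copies).
      { apply (In_copies_of_used u e j He Hj Hjk). intros i Hik Hi.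
        exact (u_lt_terms i Hik (tailsum_lt_of_gt_xk i Hik Hi)). }
      replace e with (add_index j e0); [exact (in_map _ _ _ Hcopy)|].
      symmetry. apply (reps_eq_add_index x u j e e0 Hj He).
      rewrite (proj2 (proj1 (In_copies j) Hcopy)). intros e' He'.
      exact (has_card_1_eq _ _ _ H1 He' He0). }
  assert (Hk : In k copies) by (apply In_copies; split; [lia | reflexivity]).
  assert (Hnd := NoDup_map_add_index e0 (avoids_of_reps_u_minus_xk e0 He0)).
  assert (Hmap : forall e, In e (map (fun c => add_index c e0) copies) -> reps x u e).
  { intros e He. apply in_map_iff in He as [c [<- Hc]]. exact (reps_u_add_copy c e0 Hc He0). }
  pose proof length_copies as Hlen.
  destruct (card_range u (ex_intro _ _ (reps_u_add_copy k e0 Hk He0))) as [H|H];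
    pose proof (has_card_le_length _ _ _ H Hincl); pose proof (has_card_length_le _ _ _ H Hnd Hmap);
    rewrite length_map in *; lia.
Qed.

Lemma reps_u_minus_xk_card_m_absurd e0 :
  reps x (u - x k) e0 -> has_card (reps x (u - x k)) m -> False.
Proof.
  intros He0 [L [HL [HlenL HinL]]].
  destruct exists_two_copies as [c1 [c2 [Hc1 [Hc2 Hc12]]]].
  pose proof (copies_le c1 Hc1) as Hc1k.
  assert (HkL : forall e, In e L -> avoids k e)
    by (intros e He; apply avoids_of_reps_u_minus_xk, HinL, He).
  assert (Hlen : (length (add_index c2 e0 :: map (add_index c1) L) <= m)%nat).
  { apply (reps_length_le x m ltac:(lia) card_range u); [constructor|].
    - intros Hin. apply in_map_iff in Hin as [e [He HeL]].
      exact (add_index_neq c1 c2 e e0 (avoids_of_reps_u_minus_xk e0 He0 c1 Hc1k) Hc12 He).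
    - apply NoDup_map_NoDup_ForallPairs; [|exact HL]. intros e e' He He'.
      apply add_index_inj; [apply HkL | apply HkL]; assumption.
    - intros e [<- | Hin]; [exact (reps_u_add_copy c2 e0 Hc2 He0)|].
      apply in_map_iff in Hin as [e' [<- He']].
      exact (reps_u_add_copy c1 e' Hc1 (proj2 (HinL e') He')). }
  simpl in Hlen. rewrite length_map in Hlen. lia.
Qed.

Lemma gap_absurd : False.
Proof.
  pose proof xk_le_tailsum as Hxk.
  destruct (achievement_le_xk (u - x k)) as [e0 He0]; [lra|].
  destruct (card_range _ (ex_intro _ e0 He0)) as [H|H].
  - exact (reps_u_minus_xk_unique_absurd e0 He0 H).
  - exact (reps_u_minus_xk_card_m_absurd e0 He0 H).
Qed.

End Gap.

Lemma tailsum_lt_absurd : False.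
Proof.
  pose proof xk_le_tailsum as Hxk.
  destruct (exists_gap_above x (S k) (tailsum x k) (2 * x k) tailsum_lt) as [u [Hu Hterms]].
  apply (gap_absurd u); [lra | lra | intros j Hj; apply Hterms; lia].
Qed.

End LargeTerm.

Theorem lemma3p3 (x : nat -> R) (m : nat) :
  (forall n, 0 < x n) ->
  (forall n, x (S n) <= x n) ->
  ex_series x ->
  interval_filling x ->
  (3 <= m)%nat ->
  card_fun_range_1_m x m ->
  forall k, x k <= / 2 * tailsum x k.
Proof.
  intros xpos xdec xser xfill Hm [card_range _] k.
  destruct (Rle_or_lt (x k) (/ 2 * tailsum x k)) as [H|H]; [exact H|].
  exfalso. apply (tailsum_lt_absurd x m k xpos xdec xser xfill Hm card_range). lra.
Qed.
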